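(* Let $\mathbf{X}$, $\mathbf{A}$ be $\sigma$-structures and $k\ge1$. Then $\mathrm{SA}^k(\mathbf{X},\mathbf{A})$ is feasible if and only if $\mathrm{SA}^1(\mathbf{X}^{*k},\mathbf{A}^{*k})$ is feasible.
   Context: A signature $\sigma$ is a finite set of relation symbols with arities $\operatorname{ar}(R)\ge1$; a $\sigma$-structure $\mathbf{A}$ has finite universe $A$ and relations $R^\mathbf{A}\subseteq A^{\operatorname{ar}(R)}$. Constraints: $\mathcal{C}_\mathbf{A}=\{R(\mathbf{a}):R\in\sigma,\mathbf{a}\in R^\mathbf{A}\}$ (formal symbols). For a tuple $\mathbf{a}$, $a_i$ is its $i$-th entry, $\{\mathbf{a}\}$ its set of entries; for $\mathbf{a}\in A^j$ and $\mathbf{i}=(i_1,\dots,i_n)\in[j]^n$, $\pi_\mathbf{i}\mathbf{a}=(a_{i_1},\dots,a_{i_n})$. $\mathrm{SA}^k(\mathbf{X},\mathbf{A})$: variables $p_V(f)\in[0,1]$ for $V\subseteq X$ with $1\le|V|\le k$ and $f:V\to A$, and $p_{R(\mathbf{x})}(f)\in[0,1]$ for $R(\mathbf{x})\in\mathcal{C}_\mathbf{X}$ and $f:\{\mathbf{x}\}\to A$; constraints: $\sum_{f:V\to A}p_V(f)=1$ for each $V$; $p_U(f)=\sum_{g:V\to A,\,g|_U=f}p_V(g)$ for $U\subseteq V\subseteq X$, $|V|\le k$ (nonempty $U$), $f:U\to A$; $p_U(f)=\sum_{g:\{\mathbf{x}\}\to A,\,g|_U=f}p_{R(\mathbf{x})}(g)$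 for $R(\mathbf{x})\in\mathcal{C}_\mathbf{X}$, nonempty $U\subseteq\{\mathbf{x}\}$ with $|U|\le k$, $f:U\to A$; $p_{R(\mathbf{x})}(f)=0$ whenever $f(\mathbf{x})\notin R^\mathbf{A}$. Feasible means it has a rational solution. ($\mathrm{SA}^1$ is the case $k=1$.) For $k\ge1$, $\mathbf{A}^{*k}$ is the structure with universe $\bigcup_{1\le j\le k}A^j\cup\mathcal{C}_\mathbf{A}$ (disjoint) over signature $\sigma^*_k$ with relations: unary $T_{j,S}=\{\mathbf{a}\in A^j: a_i=a_{i'}\ \forall i,i'\in S\}$ for $j\le k$, $S\subseteq[j]$; binary $T_{j,\mathbf{i}}=\{(\mathbf{a},\pi_\mathbf{i}\mathbf{a}):\mathbf{a}\in A^j\}$ for $j,j'\le k$, $\mathbf{i}\in[j]^{j'}$; unary $R_S=\{R(\mathbf{a}):\mathbf{a}\in R^\mathbf{A},\ a_i=a_{i'}\ \forall i,i'\in S\}$ for $R\in\sigma$, $S\subseteq[\operatorname{ar}(R)]$; binary $R_\mathbf{i}=\{(R(\mathbf{a}),\pi_\mathbf{i}\mathbf{a}):\mathbf{a}\in R^\mathbf{A}\}$ for $R\in\sigma$, $j\le k$, $\mathbf{i}\in[\operatorname{ar}(R)]^j$. *)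

From HB Require Import structures.
From mathcomp Require Import all_boot all_order all_algebra.
Set Implicit Arguments.
Unset Strict Implicit.
Unset Printing Implicit Defensive.
Import Order.TTheory GRing.Theory Num.Theory.
Local Open Scope ring_scope.

Record signature := Signature { sym : finType; ar : sym -> nat }.

Record sstructure (s : signature) := SStructure {
  univ :> finType;
  rel : forall R : sym s, {set (ar R).-tuple univ} }.

Section SA.
Variables (s : signature) (X A : sstructure s).

Definition cons_of (B : sstructure s) : finType :=
  {R : sym s & {t : (ar R).-tuple B | t \in rel B R}}.

Definition cons_sym (B : sstructure s) (c : cons_of B) : sym s := tag c.
Definition cons_tuple (B : sstructure s) (c : cons_of B) :
  (ar (cons_sym c)).-tuple B := val (tagged c).

(* Partial assignments f : V -> A (V subset of X) are represented as
   finite functions X -> option A whose domain is V. *)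
Definition pfun : finType := {ffun X -> option A}.
Definition dom (f : pfun) : {set X} := [set x | f x != None].
Definition restricts (g f : pfun) : bool := [forall x in dom f, g x == f x].
Definition cset (c : cons_of X) : {set X} := [set y | y \in cons_tuple c].
Definition sat (c : cons_of X) (f : pfun) : bool :=
  [exists a in rel A (cons_sym c),
     [forall i, f (tnth (cons_tuple c) i) == Some (tnth a i)]].

Definition SA_feasible (k : nat) : Prop :=
  exists (p : pfun -> rat) (q : cons_of X -> pfun -> rat),
  [/\ (forall f, (1 <= #|dom f| <= k)%N -> 0 <= p f <= 1) /\
      (forall c f, dom f = cset c -> 0 <= q c f <= 1),
      forall V : {set X}, (1 <= #|V| <= k)%N -> \sum_(f | dom f == V) p f = 1,
      forall (U V : {set X}) (f : pfun),
        U \subset V -> (1 <= #|U|)%N -> (#|V| <= k)%N -> dom f = U ->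
        p f = \sum_(g | (dom g == V) && restricts g f) p g,
      forall c (U : {set X}) (f : pfun),
        U \subset cset c -> (1 <= #|U| <= k)%N -> dom f = U ->
        p f = \sum_(g | (dom g == cset c) && restricts g f) q c g
    & forall c f, dom f = cset c -> ~~ sat c f -> q c f = 0].
End SA.

Section Star.
Variables (s : signature) (k : nat).

(* Lengths j in {1..k} are encoded as j.+1, j : 'I_k.
   - T_{j,S}:  inl (inl (inl (j; S)))          S subset [j]
   - T_{j,i}:  inl (inl (inr ((j,j'); i)))     i in [j]^{j'}
   - R_S:      inl (inr (R; S))                S subset [ar R]
   - R_i:      inr ((R,j); i)                  i in [ar R]^j         *)
Definition star_sym : finType :=
  ({j : 'I_k & {set 'I_j.+1}}
   + {jj : 'I_k * 'I_k & (jj.2.+1).-tuple 'I_(jj.1.+1)}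
   + {R : sym s & {set 'I_(ar R)}}
   + {Rj : sym s * 'I_k & (Rj.2.+1).-tuple 'I_(ar Rj.1)})%type.

Definition star_ar (S : star_sym) : nat :=
  match S with
  | inl (inl (inl _)) => 1
  | inl (inl (inr _)) => 2
  | inl (inr _) => 1
  | inr _ => 2
  end.

Definition star_sig : signature := Signature star_ar.

Variable A : sstructure s.

Definition star_univ : finType :=
  ({j : 'I_k & (j.+1).-tuple A} + cons_of A)%type.

Definition tup (j : 'I_k) (a : (j.+1).-tuple A) : star_univ :=
  inl (@Tagged 'I_k j (fun j : 'I_k => (j.+1).-tuple A) a).
Definition cst (R : sym s) (t : {t : (ar R).-tuple A | t \in rel A R}) :
  star_univ :=
  inr (@Tagged (sym s) R (fun R => {t : (ar R).-tuple A | t \in rel A R}) t).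

Definition proj (n m : nat) (a : n.-tuple A) (i : m.-tuple 'I_n) : m.-tuple A :=
  map_tuple (tnth a) i.

Definition star_rel (S : sym star_sig) : {set (@ar star_sig S).-tuple star_univ} :=
  match S as S0 return {set (star_ar S0).-tuple star_univ} with
  | inl (inl (inl (existT j T))) =>
      [set [tuple tup a] | a : (j.+1).-tuple A
         & [forall i in T, forall i' in T, tnth a i == tnth a i']]
  | inl (inl (inr (existT jj i))) =>
      [set [tuple tup a; tup (proj a i)] | a : (jj.1.+1).-tuple A]
  | inl (inr (existT R T)) =>
      [set [tuple cst t] | t : {t : (ar R).-tuple A | t \in rel A R}
         & [forall i in T, forall i' in T, tnth (val t) i == tnth (val t) i']]
  | inr (existT Rj i) =>
      [set [tuple cst t; tup (proj (val t) i)]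
         | t : {t : (ar Rj.1).-tuple A | t \in rel A Rj.1}]
  end.

Definition star : sstructure star_sig := SStructure star_rel.
End Star.

(* Both sides are equivalent to the existence of a weighting: for every element
   u of X^{*k} (a tuple of variables or a constraint of X) a probability
   distribution W u on A^{*k}, supported on the elements v of the same kind for
   which u |-> v is a well-defined assignment, and such that projecting a tuple
   or a constraint along i pushes W forward to the distribution of the
   projected tuple.
   An SA^k solution gives W u v := the probability of the assignment u |-> v.
   An SA^1 solution for (X^{*k}, A^{*k}) gives W u v := the probability of u |-> v:
   the unary relations T_{j,S} and R_S force the support condition, and the
   binary relations T_{j,i} and R_i are exactly the projection law.
   Conversely, p_V(f) := W (enum V) (f (enum V)) solves SA^k, the marginal and
   constraint equations being instances of the projection law, and weighting
   single variables by W solves SA^1 for the star structures. *)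

From Pilot Require Import Defs.
From HB Require Import structures.
From mathcomp Require Import all_boot all_order all_algebra.
Set Implicit Arguments. Unset Strict Implicit. Unset Printing Implicit Defensive.
Import Order.TTheory GRing.Theory Num.Theory.
Local Open Scope ring_scope.

Section BigReindex.
Variables (R : Type) (idx : R) (op : Monoid.com_law idx).

Lemma big_bij_in (I J : finType) (P : pred I) (Q : pred J) (h : J -> I) (F : I -> R) :
  {in Q &, injective h} -> (forall j, Q j -> P (h j)) ->
  (forall i, P i -> exists2 j, Q j & h j = i) ->
  \big[op/idx]_(i | P i) F i = \big[op/idx]_(j | Q j) F (h j).
Proof.
move=> hinj hP hsurj.
rewrite (partition_big h P) //=; apply: eq_bigr => i Pi.
have [j0 Qj0 hj0] := hsurj i Pi.
rewrite (big_pred1 j0) ?hj0 // => j /=.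
apply/andP/eqP => [[Qj /eqP hj]|->]; last by rewrite hj0.
by apply: hinj => //; rewrite hj hj0.
Qed.

Lemma big_fibers (I J : finType) (g : I -> J) (P : pred J) (F : I -> R) :
  \big[op/idx]_(j | P j) \big[op/idx]_(i | g i == j) F i =
  \big[op/idx]_(i | P (g i)) F i.
Proof.
rewrite [RHS](partition_big g P) //; apply: eq_bigr => j Pj; apply: eq_bigl => i.
by case: (eqVneq (g i) j) => [->|]; rewrite ?Pj ?andbF.
Qed.

End BigReindex.

Arguments big_bij_in {R idx op I J P Q h} F.

Section SumSupport.
Variables (V : nmodType) (I : finType) (F : I -> V).

Lemma eq_bigl_supp (P1 P2 : pred I) :
  (forall i, F i != 0 -> P1 i = P2 i) -> \sum_(i | P1 i) F i = \sum_(i | P2 i) F i.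
Proof.
move=> h; rewrite big_mkcond [RHS]big_mkcond; apply: eq_bigr => i _.
by have [->|/h ->] := eqVneq (F i) 0; rewrite ?if_same.
Qed.

Lemma sum_inj_pred1 (J : finType) (h : J -> I) (D : pred J) i :
  injective h -> (F i != 0 -> exists2 j, D j & i = h j) ->
  \sum_(j | D j && (h j == i)) F (h j) = F i.
Proof.
move=> hinj hsupp; case: (eqVneq (F i) 0) => [Fi0|nz].
  by rewrite Fi0; apply: big1 => j /andP[_ /eqP ->].
have [j0 Dj0 ->] := hsupp nz.
rewrite (big_pred1 j0) // => j /=.
by rewrite (inj_eq hinj); case: eqP => [->|]; rewrite ?Dj0 ?andbF.
Qed.

End SumSupport.

Section Assignments.
Variables (s : signature) (X A : sstructure s).
Implicit Types (x : seq X) (a : seq A) (f g : pfun X A).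

(* [assign x a] maps each x_i to a_i, the first occurrence winning; [consistent x a]
   holds when it agrees with every occurrence, i.e. x_i = x_j implies a_i = a_j. *)
Definition assign x a : pfun X A := [ffun y => nth None (map Some a) (index y x)].
Definition consistent x a : bool := map (assign x a) x == map Some a.
Definition single (u : X) (v : A) : pfun X A := [ffun y => if y == u then Some v else None].

Lemma size_consistent x a : consistent x a -> size a = size x.
Proof. by move/eqP/(congr1 size); rewrite !size_map. Qed.

Lemma assign_nth x a y0 i : consistent x a -> (i < size x)%N ->
  assign x a (nth y0 x i) = nth None (map Some a) i.
Proof. by move/eqP=> <- lt; rewrite (nth_map y0). Qed.

Lemma assign_out x a y : size a = size x -> y \notin x -> assign x a y = None.
Proof. by move=> sz yx; rewrite ffunE nth_default // size_map sz memNindex. Qed.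

Lemma dom_assign x a : consistent x a -> dom (assign x a) = [set y | y \in x].
Proof.
move=> c; apply/setP => y; rewrite !inE.
have [yx|yx] := boolP (y \in x); last by rewrite assign_out ?(size_consistent c).
rewrite ffunE; have : (index y x < size a)%N by rewrite (size_consistent c) index_mem.
by elim: (a) (index y x) => [|a0 a' IH] [|i] //= /IH.
Qed.

Lemma assign_inj x a b : consistent x a -> consistent x b -> assign x a = assign x b -> a = b.
Proof. by move=> /eqP ca /eqP cb e; apply: (inj_map Some_inj); rewrite -ca -cb e. Qed.

Lemma map_Some_assign x a g : map g x = map Some a ->
  {in x, assign x a =1 g} /\ consistent x a.
Proof.
move=> e; have h : {in x, assign x a =1 g}.
  by move=> y yx; rewrite ffunE -e (nth_map y) ?index_mem // nth_index.
by split=> //; apply/eqP; rewrite -e; apply/eq_in_map.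
Qed.

Lemma assign_eq_dom x a g : map g x = map Some a -> dom g = [set y | y \in x] ->
  assign x a = g.
Proof.
move=> e d; have [h c] := map_Some_assign e; apply/ffunP => y.
have [yx|yx] := boolP (y \in x); first exact: h.
rewrite assign_out ?(size_consistent c) //.
by apply/esym/eqP; apply: contraNT yx => gy; rewrite -[y \in x]in_set -d inE.
Qed.

Lemma uniq_consistent x a : uniq x -> size a = size x -> consistent x a.
Proof.
move=> u sz; apply/eqP; apply: (@eq_from_nth _ None); first by rewrite !size_map.
rewrite size_map => i lt; case: x u sz lt => [|y0 x] // u sz lt.
by rewrite (nth_map y0) // ffunE index_uniq.
Qed.

Lemma consistent1 u v : consistent [:: u] [:: v].
Proof. exact: uniq_consistent. Qed.

Lemma consistent_pair u1 u2 v1 v2 :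
  consistent [:: u1; u2] [:: v1; v2] = (u1 == u2) ==> (v1 == v2).
Proof.
rewrite /consistent /= !ffunE /= eqxx /=.
by case: (eqVneq u1 u2) => [_|_] /=; [apply/eqP/eqP => [[->]|->] | rewrite !eqxx].
Qed.

Lemma assign_tnth n (x : n.-tuple X) (a : n.-tuple A) m :
  consistent x a -> assign x a (tnth x m) = Some (tnth a m).
Proof.
move=> c; rewrite (tnth_nth (tnth x m)) (assign_nth _ c) ?size_tuple //.
by rewrite (nth_map (tnth a m)) ?size_tuple // -tnth_nth.
Qed.

Lemma map_assign_proj n m (x : n.-tuple X) (a : n.-tuple A) (i : m.-tuple 'I_n) :
  consistent x a -> map (assign x a) (proj x i) = map Some (proj a i).
Proof. by move=> c; rewrite -!map_comp; apply: eq_map => z /=; apply: assign_tnth. Qed.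

Lemma consistent_proj n m (x : n.-tuple X) (a : n.-tuple A) (i : m.-tuple 'I_n) :
  consistent x a -> consistent (proj x i) (proj a i).
Proof. by move=> c; have [] := map_Some_assign (map_assign_proj i c). Qed.

Lemma consistent_tnth n (x : n.-tuple X) (a : n.-tuple A) :
  (forall i j, tnth x i = tnth x j -> tnth a i = tnth a j) -> consistent x a.
Proof.
move=> h; apply/eqP.
have -> : map (assign x a) x = map_tuple (assign x a) x by [].
have -> : map Some a = map_tuple Some a by [].
congr val; apply/eqP; rewrite eqEtuple; apply/forallP => m; rewrite !tnth_map.
have lt : (index (tnth x m) x < n)%N.
  by rewrite -[n in (_ < n)%N](size_tuple x) index_mem mem_tnth.
rewrite ffunE (nth_map (tnth a m)) ?size_tuple // -(tnth_nth _ _ (Ordinal lt)).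
by rewrite (h _ m) // (tnth_nth (tnth x m)) /= nth_index // mem_tnth.
Qed.

Lemma exists_map_Some n (x : n.-tuple X) g :
  dom g = [set y | y \in x] -> exists a : n.-tuple A, map g x = map Some a.
Proof.
move=> d; have all_in : all (fun y => isSome (g y)) x.
  apply/allP => y yx; have : y \in dom g by rewrite d inE.
  by rewrite inE; case: (g y).
have sz : size (pmap g x) == n by move: all_in; rewrite all_count size_pmap size_tuple.
by exists (Tuple sz); rewrite /= pmapS_filter (all_filterP all_in).
Qed.

Lemma sum_assign_cond n (x : n.-tuple X) (D : pred (n.-tuple A)) (P : pred (pfun X A))
    (F : pfun X A -> rat) :
  \sum_(g | [&& dom g == [set y | y \in x], P g &
             [exists a, D a && (map g x == map Some a)]]) F g
  = \sum_(a | [&& D a, consistent x a & P (assign x a)]) F (assign x a).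
Proof.
apply: big_bij_in.
- by move=> a b /and3P[_ ca _] /and3P[_ cb _] e; apply/val_inj/(assign_inj ca cb).
- move=> a /and3P[Da ca Pa]; rewrite dom_assign // eqxx Pa /=.
  by apply/existsP; exists a; rewrite Da /=.
move=> g /and3P[/eqP d Pg /existsP[a /andP[Da /eqP e]]].
have [_ ca] := map_Some_assign e.
by exists a; rewrite ?Da ?ca ?(assign_eq_dom e d).
Qed.

Lemma sum_assign n (x : n.-tuple X) (P : pred (pfun X A)) (F : pfun X A -> rat) :
  \sum_(g | (dom g == [set y | y \in x]) && P g) F g
  = \sum_(a : n.-tuple A | consistent x a && P (assign x a)) F (assign x a).
Proof.
rewrite -(sum_assign_cond x predT); apply: eq_bigl => g.
have [/eqP d|//] := boolP (dom g == _); case: (P g) => //=.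
by have [a e] := exists_map_Some d; symmetry; apply/existsP; exists a; rewrite e eqxx.
Qed.

Lemma dom_single u v : dom (single u v) = [set u].
Proof. by apply/setP => z; rewrite !inE ffunE; case: (z == u). Qed.

Lemma dom_set1 g u : dom g = [set u] -> exists v, g = single u v.
Proof.
move=> d; have : u \in dom g by rewrite d inE.
rewrite inE; case E: (g u) => [v|] // _; exists v.
apply/ffunP => z; rewrite ffunE; case: eqP => [->//|/eqP ne].
by apply/eqP; apply: contraNT ne => gz; rewrite -in_set1 -d inE.
Qed.

Lemma sum_dom_set1 u (F : pfun X A -> rat) :
  \sum_(g | dom g == [set u]) F g = \sum_v F (single u v).
Proof.
apply: big_bij_in => //.
- by move=> v w _ _ /(congr1 (fun g : pfun X A => g u)); rewrite !ffunE eqxx => -[].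
- by move=> v _; rewrite dom_single.
by move=> g /eqP /dom_set1 [v ->]; exists v.
Qed.

Lemma restricts_single g u v : restricts g (single u v) = (g u == Some v).
Proof.
rewrite /restricts dom_single; apply/forallP/idP => [/(_ u)|gu z].
  by rewrite inE eqxx ffunE eqxx.
by apply/implyP; rewrite inE ffunE => /eqP ->; rewrite eqxx.
Qed.

Lemma restricts_dom_eq g f : dom g = dom f -> restricts g f = (g == f).
Proof.
move=> d; apply/forallP/eqP => [H|->]; last by move=> z; apply/implyP.
apply/ffunP => z; have [zf|zf] := boolP (z \in dom f); first by have /implyP/(_ zf)/eqP := H z.
have gz : g z = None by move: zf; rewrite -d inE negbK => /eqP.
by move: zf; rewrite inE negbK gz => /eqP.
Qed.

Lemma assign_eq_restricts x a g f : map g x = map Some a ->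
  dom f = [set z | z \in x] -> (assign x a == f) = restricts g f.
Proof.
move=> e d; have [h c] := map_Some_assign e.
rewrite -(restricts_dom_eq (f := f)) ?dom_assign ?d //.
rewrite /restricts; apply: eq_forallb => z; rewrite d inE.
by have [zx|] := boolP (z \in x); rewrite //= h.
Qed.

Lemma restricts_assign_proj n m (x : n.-tuple X) (a : n.-tuple A) (i : m.-tuple 'I_n)
    (b : m.-tuple A) :
  consistent x a -> consistent (proj x i) b ->
  restricts (assign x a) (assign (proj x i) b) = (proj a i == b).
Proof.
move=> ca cb; rewrite -(assign_eq_restricts (map_assign_proj i ca) (dom_assign cb)).
apply/eqP/eqP => [H|->] //; apply: val_inj; exact: assign_inj (consistent_proj i ca) cb H.
Qed.

Lemma satE (c : cons_of X) g :
  sat c g =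
  [exists a, (a \in Defs.rel A (cons_sym c)) && (map g (Defs.cons_tuple c) == map Some a)].
Proof.
apply: eq_existsb => a; congr andb.
have -> : map g (Defs.cons_tuple c) = map_tuple g (Defs.cons_tuple c) by [].
have -> : map Some a = map_tuple Some a by [].
by rewrite (inj_eq val_inj) eqEtuple; apply: eq_forallb => i; rewrite !tnth_map.
Qed.

Lemma sum_cons_sat_assign (c : cons_of X) (P : pred (pfun X A)) (F : pfun X A -> rat) :
  \sum_(g | [&& dom g == cset c, P g & sat c g]) F g =
  \sum_(a | [&& a \in Defs.rel A (cons_sym c), consistent (Defs.cons_tuple c) a
              & P (assign (Defs.cons_tuple c) a)]) F (assign (Defs.cons_tuple c) a).
Proof. by rewrite -sum_assign_cond; apply: eq_bigl => g; rewrite satE. Qed.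

End Assignments.

Section ConstraintSums.
Variables (s : signature) (X A : sstructure s) (q : cons_of X -> pfun X A -> rat).
Hypothesis q_unsat : forall c f, dom f = cset c -> ~~ sat c f -> q c f = 0.

Lemma sum_cons_sat (c : cons_of X) (P : pred (pfun X A)) :
  \sum_(g | (dom g == cset c) && P g) q c g =
  \sum_(g | [&& dom g == cset c, P g & sat c g]) q c g.
Proof.
rewrite [RHS](eq_bigl (fun g => ((dom g == cset c) && P g) && sat c g)); last first.
  by move=> g; rewrite andbA.
rewrite [RHS]big_mkcondr; apply: eq_bigr => g /andP[/eqP d _].
by case: ifP => // /negbT ns; rewrite q_unsat.
Qed.

Lemma sum_cons_restricts_single (c : cons_of X) (m : 'I_(ar (cons_sym c))) v :
  \sum_(g | (dom g == cset c) && restricts g (single (tnth (Defs.cons_tuple c) m) v)) q c g =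
  \sum_(a | [&& a \in Defs.rel A (cons_sym c), consistent (Defs.cons_tuple c) a & tnth a m == v])
     q c (assign (Defs.cons_tuple c) a).
Proof.
rewrite sum_cons_sat sum_cons_sat_assign; apply: eq_bigl => a.
have [ca|] := boolP (consistent _ a); last by rewrite andbF.
by rewrite restricts_single assign_tnth.
Qed.

End ConstraintSums.

Section Tuples.
Variables (s : signature) (B : sstructure s).

Lemma mem_proj n m (x : n.-tuple B) (i : m.-tuple 'I_n) y :
  y \in (proj x i : seq B) -> y \in (x : seq B).
Proof. by move=> /mapP[z _ ->]; apply: mem_tnth. Qed.

Lemma proj_exists n m (x : n.-tuple B) (y : m.-tuple B) (o : 'I_n) :
  {subset y <= x} -> exists i : m.-tuple 'I_n, proj x i = y.
Proof.
move=> sub; exists (map_tuple (fun z => insubd o (index z x)) y).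
apply: val_inj; rewrite /= -map_comp -[RHS]map_id; apply/eq_in_map => z zy /=.
have lt : (index z x < n)%N by rewrite -[n in (_ < n)%N](size_tuple x) index_mem sub.
by rewrite (tnth_nth z) val_insubd lt nth_index ?sub.
Qed.

End Tuples.

Lemma card_set_tuple (T : finType) n (x : n.-tuple T) :
  (0 < n)%N -> (1 <= #|[set y | y \in x]| <= n)%N.
Proof.
move=> n0; apply/andP; split.
  by rewrite card_gt0; apply/set0Pn; exists (tnth x (Ordinal n0)); rewrite inE mem_tnth.
by rewrite cardsE; have := card_size x; rewrite size_tuple.
Qed.

Lemma card_set_tup (T : finType) k (j : 'I_k) (x : (j.+1).-tuple T) :
  (1 <= #|[set y | y \in x]| <= k)%N.
Proof.
have /andP[-> le] := card_set_tuple x (ltn0Sn j).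
exact: leq_trans le (ltn_ord j).
Qed.

Definition pattern (T : eqType) n (x : n.-tuple T) (S : {set 'I_n}) : bool :=
  [forall i in S, forall i' in S, tnth x i == tnth x i'].

Lemma pattern_set0 (T : eqType) n (x : n.-tuple T) : pattern x set0.
Proof. by apply/forallP => i; rewrite inE. Qed.

Lemma pattern_set2P (T : eqType) n (x : n.-tuple T) i i' :
  reflect (tnth x i = tnth x i') (pattern x [set i; i']).
Proof.
apply: (iffP idP) => [/forallP/(_ i)|e].
  by rewrite !inE eqxx => /forallP/(_ i'); rewrite !inE eqxx orbT => /eqP.
apply/forallP => m; apply/implyP; rewrite !inE => /orP[] /eqP ->;
  apply/forallP => m'; apply/implyP; rewrite !inE => /orP[] /eqP ->;
  by rewrite ?e eqxx.
Qed.

Lemma pattern_consistent (s : signature) (X A : sstructure s) n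
    (x : n.-tuple X) (a : n.-tuple A) S :
  consistent x a -> pattern x S -> pattern a S.
Proof.
move=> c /forallP px; apply/forallP => i; apply/implyP => iS.
apply/forallP => i'; apply/implyP => i'S.
have /implyP/(_ iS)/forallP/(_ i')/implyP/(_ i'S)/eqP e := px i.
by have := assign_tnth i c; rewrite e (assign_tnth i' c) => -[->].
Qed.

Section StarUniverse.
Variables (s : signature) (k : nat) (B : sstructure s).
Implicit Types u v : star_univ k B.

Definition star_seq u : seq B :=
  match u with inl (existT _ x) => val x | inr c => val (Defs.cons_tuple c) end.
Definition star_kind u : ('I_k + sym s)%type :=
  match u with inl (existT j _) => inl j | inr c => inr (tag c) end.

Lemma star_kind_seq_inj u u' :
  star_kind u = star_kind u' -> star_seq u = star_seq u' -> u = u'.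
Proof.
case: u => [[j x]|[R [t Ht]]]; case: u' => [[j' x']|[R' [t' Ht']]] //= [e] e'.
  by subst j'; congr (inl (existT _ j _)); apply: val_inj.
by subst R'; congr (inr (existT _ R _)); apply/val_inj/val_inj.
Qed.

Lemma tup_inj (j : 'I_k) (a b : (j.+1).-tuple B) : tup a = tup b -> a = b.
Proof. by move/(congr1 star_seq) => /= e; apply: val_inj. Qed.

Lemma cst_inj R (a b : {t : (ar R).-tuple B | t \in Defs.rel B R}) :
  cst k a = cst k b -> a = b.
Proof. by move/(congr1 star_seq) => /= e; apply/val_inj/val_inj. Qed.

Lemma star_kind_tup (j : 'I_k) v : star_kind v = inl j -> exists b : (j.+1).-tuple B, v = tup b.
Proof. by case: v => [[j' b]|d] //= [e]; subst j'; exists b. Qed.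

Lemma sum_kind_tup (j : 'I_k) (P : pred (star_univ k B)) (F : star_univ k B -> rat) :
  \sum_(v | (star_kind v == inl j) && P v) F v =
  \sum_(a : (j.+1).-tuple B | P (tup a)) F (tup a).
Proof.
apply: big_bij_in => [a b _ _|a Pa|]; [exact: tup_inj | by rewrite /= eqxx |].
by case=> [[j' x]|c] //= /andP[/eqP [e] Pv]; subst j'; exists x.
Qed.

Lemma sum_kind_cst R (P : pred (star_univ k B)) (F : star_univ k B -> rat) :
  \sum_(v | (star_kind v == inr R) && P v) F v =
  \sum_(a : {t : (ar R).-tuple B | t \in Defs.rel B R} | P (cst k a)) F (cst k a).
Proof.
apply: big_bij_in => [a b _ _|a Pa|]; [exact: cst_inj | by rewrite /= eqxx |].
by case=> [[j x]|[R' t]] //= /andP[/eqP [e] Pv]; subst R'; exists t.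
Qed.

End StarUniverse.

Section Weighting.
Variables (s : signature) (X A : sstructure s) (k : nat).

Definition compatible (u : star_univ k X) (v : star_univ k A) : bool :=
  (star_kind v == star_kind u) && consistent (star_seq u) (star_seq v).

Record weighting (W : star_univ k X -> star_univ k A -> rat) : Prop := Weighting {
  weighting_bounds : forall u v, 0 <= W u v <= 1;
  weighting_sum1 : forall u, \sum_v W u v = 1;
  weighting_compatible : forall u v, W u v != 0 -> compatible u v;
  weighting_proj_tup : forall (j j' : 'I_k) (x : (j.+1).-tuple X)
      (i : (j'.+1).-tuple 'I_(j.+1)) (b : (j'.+1).-tuple A),
    W (tup (proj x i)) (tup b) = \sum_(a : (j.+1).-tuple A | proj a i == b) W (tup x) (tup a);
  weighting_proj_cst : forall (R : sym s) (t : {t : (ar R).-tuple X | t \in Defs.rel X R})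
      (j : 'I_k) (i : (j.+1).-tuple 'I_(ar R)) (b : (j.+1).-tuple A),
    W (tup (proj (val t) i)) (tup b) =
    \sum_(d : {t : (ar R).-tuple A | t \in Defs.rel A R} | proj (val d) i == b)
      W (cst k t) (cst k d) }.

End Weighting.

Section SAtoWeighting.
Variables (s : signature) (X A : sstructure s) (k : nat).
Hypothesis ar_pos : forall R : sym s, (0 < ar R)%N.
Hypothesis k_pos : (1 <= k)%N.
Variables (p : pfun X A -> rat) (q : cons_of X -> pfun X A -> rat).
Hypothesis p_bounds : forall f, (1 <= #|dom f| <= k)%N -> 0 <= p f <= 1.
Hypothesis q_bounds : forall c f, dom f = cset c -> 0 <= q c f <= 1.
Hypothesis p_sum1 : forall V : {set X}, (1 <= #|V| <= k)%N -> \sum_(f | dom f == V) p f = 1.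
Hypothesis p_marg : forall (U V : {set X}) (f : pfun X A),
  U \subset V -> (1 <= #|U|)%N -> (#|V| <= k)%N -> dom f = U ->
  p f = \sum_(g | (dom g == V) && restricts g f) p g.
Hypothesis p_cons : forall c (U : {set X}) (f : pfun X A),
  U \subset cset c -> (1 <= #|U| <= k)%N -> dom f = U ->
  p f = \sum_(g | (dom g == cset c) && restricts g f) q c g.
Hypothesis q_unsat : forall c f, dom f = cset c -> ~~ sat c f -> q c f = 0.

Definition sa_dist (u : star_univ k X) : pfun X A -> rat :=
  match u with inl _ => p | inr c => q c end.

Definition sa_weight (u : star_univ k X) (v : star_univ k A) : rat :=
  if compatible u v then sa_dist u (assign (star_seq u) (star_seq v)) else 0.

(* q_c marginalizes to p on any single entry of c; this is where ar R > 0 and k >= 1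
   are needed. *)
Lemma q_sum1 c : \sum_(g | dom g == cset c) q c g = 1.
Proof.
pose y := tnth (Defs.cons_tuple c) (Ordinal (ar_pos (cons_sym c))).
have yc : y \in cset c by rewrite inE mem_tnth.
rewrite -(p_sum1 (V := [set y])) ?cards1 // sum_dom_set1.
under [RHS]eq_bigr do rewrite (p_cons (c := c) (U := [set y])) ?sub1set ?dom_single ?cards1 //.
rewrite (exchange_big_dep (fun g => dom g == cset c)) /=; last by move=> v g _ /andP[].
apply: eq_bigr => g /eqP dg.
have : y \in dom g by rewrite dg.
rewrite inE; case E: (g y) => [w|] // _.
by rewrite (big_pred1 w) // => v /=; rewrite dg eqxx restricts_single E.
Qed.

Lemma sa_weight_bounds u v : 0 <= sa_weight u v <= 1.
Proof.
rewrite /sa_weight; case: ifP => [/andP[_ cuv]|_]; last by rewrite lexx ler01.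
case: u cuv => [[j x]|c] /= cuv; last by apply: q_bounds; apply: dom_assign.
by apply: p_bounds; rewrite dom_assign // card_set_tup.
Qed.

Lemma sa_weight_sum1 u : \sum_v sa_weight u v = 1.
Proof.
rewrite /sa_weight -big_mkcond /=.
case: u => [[j x]|[R [t Ht]]] /=.
  rewrite (sum_kind_tup j (fun v => consistent x (star_seq v))) /=.
  rewrite -(p_sum1 (card_set_tup x)).
  transitivity (\sum_(g | (dom g == [set y | y \in x]) && predT g) p g).
    by rewrite sum_assign; apply: eq_bigl => a; rewrite andbT.
  by apply: eq_bigl => g; rewrite andbT.
pose c : cons_of X := existT _ R (exist _ t Ht).
rewrite (sum_kind_cst R (fun v => consistent t (star_seq v))) /=.
rewrite -(big_sub_cond (Defs.rel A R) (consistent t) (fun a => q c (assign t a))).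
rewrite -(q_sum1 c).
transitivity (\sum_(g | (dom g == cset c) && predT g) q c g).
  by rewrite sum_cons_sat // sum_cons_sat_assign; apply: eq_bigl => a; rewrite andbT.
by apply: eq_bigl => g; rewrite andbT.
Qed.

Lemma sa_weight_compatible u v : sa_weight u v != 0 -> compatible u v.
Proof. by rewrite /sa_weight; case: ifP => //; rewrite eqxx. Qed.

Lemma sa_weight_proj_tup (j j' : 'I_k) (x : (j.+1).-tuple X)
    (i : (j'.+1).-tuple 'I_(j.+1)) (b : (j'.+1).-tuple A) :
  sa_weight (tup (proj x i)) (tup b) =
  \sum_(a : (j.+1).-tuple A | proj a i == b) sa_weight (tup x) (tup a).
Proof.
rewrite /sa_weight /compatible /= !eqxx /=.
have [cb|ncb] := boolP (consistent (proj x i) b); last first.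
  apply/esym/big1 => a /eqP pa; case: ifP => // ca.
  by move: ncb; rewrite -pa consistent_proj.
have sub : [set y | y \in (proj x i : seq X)] \subset [set y | y \in (x : seq X)].
  by apply/subsetP => y; rewrite !inE; apply: mem_proj.
have /andP[U1 _] := card_set_tup (proj x i); have /andP[_ Vk] := card_set_tup x.
rewrite (p_marg sub U1 Vk (dom_assign cb)) sum_assign -big_mkcondr /=.
apply: eq_bigl => a; have [ca|] := boolP (consistent x a); last by rewrite andbF.
by rewrite restricts_assign_proj // andbT.
Qed.

Lemma sa_weight_proj_cst (R : sym s) (t : {t : (ar R).-tuple X | t \in Defs.rel X R})
    (j : 'I_k) (i : (j.+1).-tuple 'I_(ar R)) (b : (j.+1).-tuple A) :
  sa_weight (tup (proj (val t) i)) (tup b) =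
  \sum_(d : {t : (ar R).-tuple A | t \in Defs.rel A R} | proj (val d) i == b)
    sa_weight (cst k t) (cst k d).
Proof.
rewrite /sa_weight /compatible /= !eqxx /=.
have [cb|ncb] := boolP (consistent (proj (val t) i) b); last first.
  apply/esym/big1 => a /eqP pa; case: ifP => // ca.
  by move: ncb; rewrite -pa consistent_proj.
pose c : cons_of X := existT _ R t.
have sub : [set y | y \in (proj (val t) i : seq X)] \subset cset c.
  by apply/subsetP => y; rewrite !inE; apply: mem_proj.
rewrite (p_cons sub (card_set_tup _) (dom_assign cb)) sum_cons_sat //.
rewrite sum_cons_sat_assign -big_mkcondr big_sub_cond /Defs.cons_tuple /=.
apply: eq_bigl => d; have [cd|] := boolP (consistent _ (val d)); last by rewrite andbF.
by rewrite restricts_assign_proj // andbC.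
Qed.

Lemma sa_weighting : weighting sa_weight.
Proof.
split; [exact: sa_weight_bounds | exact: sa_weight_sum1 | exact: sa_weight_compatible
       | exact: sa_weight_proj_tup | exact: sa_weight_proj_cst].
Qed.

End SAtoWeighting.

Lemma SA_feasible_weighting (s : signature) (X A : sstructure s) (k : nat) :
  (forall R : sym s, 0 < ar R)%N -> (1 <= k)%N ->
  SA_feasible X A k -> exists W, weighting (k := k) (X := X) (A := A) W.
Proof.
move=> ar_pos k_pos [p [q [[p01 q01] p_sum1 p_marg p_cons q_unsat]]].
by exists (sa_weight p q); apply: sa_weighting.
Qed.

Section SA1Singles.
Variables (s : signature) (B C : sstructure s).
Variables (P : pfun B C -> rat) (Q : cons_of B -> pfun B C -> rat).
Hypothesis P_cons : forall c (U : {set B}) (f : pfun B C),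
  U \subset cset c -> (1 <= #|U| <= 1)%N -> dom f = U ->
  P f = \sum_(g | (dom g == cset c) && restricts g f) Q c g.
Hypothesis Q_unsat : forall c f, dom f = cset c -> ~~ sat c f -> Q c f = 0.

Lemma SA1_single_cons c (m : 'I_(ar (cons_sym c))) v :
  P (single (tnth (Defs.cons_tuple c) m) v) =
  \sum_(a | [&& a \in Defs.rel C (cons_sym c), consistent (Defs.cons_tuple c) a
             & tnth a m == v]) Q c (assign (Defs.cons_tuple c) a).
Proof.
rewrite (P_cons (c := c) (U := [set tnth (Defs.cons_tuple c) m])) ?dom_single ?cards1 //.
  exact: sum_cons_restricts_single.
by rewrite sub1set inE mem_tnth.
Qed.

Lemma SA1_single_support c (m : 'I_(ar (cons_sym c))) v :
  P (single (tnth (Defs.cons_tuple c) m) v) != 0 ->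
  exists a, [&& a \in Defs.rel C (cons_sym c), consistent (Defs.cons_tuple c) a
             & tnth a m == v].
Proof.
rewrite SA1_single_cons => nz; apply/existsP; apply: contraNT nz => /existsPn H.
by apply/eqP/big1 => a Ha; move: (H a); rewrite Ha.
Qed.

Lemma SA1_single_marg c (J : finType) (h : J -> (ar (cons_sym c)).-tuple C)
    (m0 m1 : 'I_(ar (cons_sym c))) v :
  (forall a, h a \in Defs.rel C (cons_sym c)) ->
  (forall t, t \in Defs.rel C (cons_sym c) -> exists a, t = h a) ->
  injective (fun a => tnth (h a) m0) ->
  P (single (tnth (Defs.cons_tuple c) m1) v) =
  \sum_(a | tnth (h a) m1 == v) P (single (tnth (Defs.cons_tuple c) m0) (tnth (h a) m0)).
Proof.
move=> hin hsurj hinj; set t := Defs.cons_tuple c.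
have hinj' : injective h by move=> a b e; apply: hinj => /=; rewrite e.
have reindex_h (m : 'I_(ar (cons_sym c))) w :
    P (single (tnth t m) w) =
    \sum_(a | consistent t (h a) && (tnth (h a) m == w)) Q c (assign t (h a)).
  rewrite SA1_single_cons; apply: big_bij_in => [a b _ _|a /andP[-> ->]|t'].
  - exact: hinj'.
  - by rewrite hin.
  by move=> /and3P[/hsurj [a ->] ca wa]; exists a; rewrite ?ca.
rewrite reindex_h (eq_bigl (fun a => (tnth (h a) m1 == v) && consistent t (h a))); last first.
  by move=> a; rewrite andbC.
rewrite big_mkcondr; apply: eq_bigr => a _.
rewrite reindex_h (eq_bigl (fun b => (b == a) && consistent t (h b))); last first.
  by move=> b /=; rewrite andbC; congr andb; apply/eqP/eqP => [/hinj|->].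
by rewrite big_mkcondr big_pred1_eq.
Qed.

End SA1Singles.

Section StarConstraints.
Variables (s : signature) (k : nat) (B : sstructure s).

Lemma star_rel_Teq (j : 'I_k) (S : {set 'I_j.+1}) (x : (j.+1).-tuple B) :
  pattern x S ->
  [tuple tup x] \in star_rel B (inl (inl (inl (existT _ j S))) : star_sym s k).
Proof. by move=> px; apply/imsetP; exists x; rewrite ?inE. Qed.

Lemma star_rel_Req (R : sym s) (S : {set 'I_(ar R)})
    (t : {t : (ar R).-tuple B | t \in Defs.rel B R}) :
  pattern (val t) S ->
  [tuple cst k t] \in star_rel B (inl (inr (existT _ R S)) : star_sym s k).
Proof. by move=> pt; apply/imsetP; exists t; rewrite ?inE. Qed.

Lemma star_rel_Tproj (j j' : 'I_k) (i : (j'.+1).-tuple 'I_(j.+1)) (x : (j.+1).-tuple B) :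
  [tuple tup x; tup (proj x i)] \in
    star_rel B (inl (inl (inr (existT _ (j, j') i))) : star_sym s k).
Proof. by apply/imsetP; exists x. Qed.

Lemma star_rel_Rproj (R : sym s) (j : 'I_k) (i : (j.+1).-tuple 'I_(ar R))
    (t : {t : (ar R).-tuple B | t \in Defs.rel B R}) :
  [tuple cst k t; tup (proj (val t) i)] \in
    star_rel B (inr (existT _ (R, j) i) : star_sym s k).
Proof. by apply/imsetP; exists t. Qed.

Definition Teq_cons (j : 'I_k) (S : {set 'I_j.+1}) (x : (j.+1).-tuple B) (px : pattern x S) :
    cons_of (star k B) :=
  existT _ (inl (inl (inl (existT _ j S))) : star_sym s k)
    (exist _ [tuple tup x] (star_rel_Teq px)).
Definition Req_cons (R : sym s) (S : {set 'I_(ar R)})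
    (t : {t : (ar R).-tuple B | t \in Defs.rel B R}) (pt : pattern (val t) S) :
    cons_of (star k B) :=
  existT _ (inl (inr (existT _ R S)) : star_sym s k)
    (exist _ [tuple cst k t] (star_rel_Req pt)).
Definition Tproj_cons (j j' : 'I_k) (i : (j'.+1).-tuple 'I_(j.+1)) (x : (j.+1).-tuple B) :
    cons_of (star k B) :=
  existT _ (inl (inl (inr (existT _ (j, j') i))) : star_sym s k)
    (exist _ [tuple tup x; tup (proj x i)] (star_rel_Tproj i x)).
Definition Rproj_cons (R : sym s) (j : 'I_k) (i : (j.+1).-tuple 'I_(ar R))
    (t : {t : (ar R).-tuple B | t \in Defs.rel B R}) : cons_of (star k B) :=
  existT _ (inr (existT _ (R, j) i) : star_sym s k)
    (exist _ [tuple cst k t; tup (proj (val t) i)] (star_rel_Rproj i t)).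

Lemma star_ar_gt0 (S : star_sym s k) : (0 < star_ar S)%N.
Proof. by case: S => [[[]|]|]. Qed.

Definition cons_entry0 (c : cons_of (star k B)) : 'I_(ar (cons_sym c)) :=
  Ordinal (star_ar_gt0 (cons_sym c)).

End StarConstraints.

Section SA1toWeighting.
Variables (s : signature) (X A : sstructure s) (k : nat).
Variables (P : pfun (star k X) (star k A) -> rat)
          (Q : cons_of (star k X) -> pfun (star k X) (star k A) -> rat).
Hypothesis P_bounds : forall f, (1 <= #|dom f| <= 1)%N -> 0 <= P f <= 1.
Hypothesis P_sum1 : forall V : {set star k X}, (1 <= #|V| <= 1)%N ->
  \sum_(f | dom f == V) P f = 1.
Hypothesis P_cons : forall c (U : {set star k X}) (f : pfun (star k X) (star k A)),
  U \subset cset c -> (1 <= #|U| <= 1)%N -> dom f = U ->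
  P f = \sum_(g | (dom g == cset c) && restricts g f) Q c g.
Hypothesis Q_unsat : forall c f, dom f = cset c -> ~~ sat c f -> Q c f = 0.

Definition SA1_weight (u : star_univ k X) (v : star_univ k A) : rat :=
  P (@single _ (star k X) (star k A) u v).

Lemma SA1_weight_tup_pattern (j : 'I_k) (S : {set 'I_j.+1}) (x : (j.+1).-tuple X) v :
  pattern x S -> SA1_weight (tup x) v != 0 ->
  exists2 a : (j.+1).-tuple A, pattern a S & v = tup a.
Proof.
move=> px nz.
have := @SA1_single_support _ _ _ P Q P_cons Q_unsat (Teq_cons px) ord0 v nz.
by case=> t0 /and3P[/imsetP[a]]; rewrite inE => pa -> _ /eqP <-; exists a.
Qed.

Lemma SA1_weight_cst_pattern (R : sym s) (S : {set 'I_(ar R)})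
    (t : {t : (ar R).-tuple X | t \in Defs.rel X R}) v :
  pattern (val t) S -> SA1_weight (cst k t) v != 0 ->
  exists2 d : {t : (ar R).-tuple A | t \in Defs.rel A R}, pattern (val d) S & v = cst k d.
Proof.
move=> pt nz.
have := @SA1_single_support _ _ _ P Q P_cons Q_unsat (Req_cons k pt) ord0 v nz.
by case=> t0 /and3P[/imsetP[d]]; rewrite inE => pd -> _ /eqP <-; exists d.
Qed.

Lemma SA1_weight_compatible u v : SA1_weight u v != 0 -> compatible u v.
Proof.
case: u => [[j x]|[R t]] nz.
  have [a _ ev] := SA1_weight_tup_pattern (pattern_set0 x) nz.
  rewrite /compatible ev /= eqxx /=; apply: consistent_tnth => i i' /pattern_set2P e.
  have [a' /pattern_set2P pa' e'] := SA1_weight_tup_pattern e nz.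
  by rewrite (tup_inj (etrans (esym ev) e')).
have [d _ ev] := SA1_weight_cst_pattern (t := t) (pattern_set0 (val t)) nz.
rewrite /compatible ev /= eqxx /=; apply: consistent_tnth => i i' /pattern_set2P e.
have [d' /pattern_set2P pd' e'] := SA1_weight_cst_pattern (t := t) e nz.
by rewrite (cst_inj (etrans (esym ev) e')).
Qed.

Lemma SA1_weight_proj_tup (j j' : 'I_k) (x : (j.+1).-tuple X)
    (i : (j'.+1).-tuple 'I_(j.+1)) (b : (j'.+1).-tuple A) :
  SA1_weight (tup (proj x i)) (tup b) =
  \sum_(a : (j.+1).-tuple A | proj a i == b) SA1_weight (tup x) (tup a).
Proof.
pose h (a : (j.+1).-tuple A) : (ar (cons_sym (Tproj_cons i x))).-tuple (star k A) :=
  [tuple tup a; tup (proj a i)].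
have marg := @SA1_single_marg _ _ _ P Q P_cons Q_unsat (Tproj_cons i x) _ h ord0 ord_max.
rewrite /SA1_weight marg; first by apply: eq_bigl => a; apply/eqP/eqP => [/tup_inj|<-].
- by move=> a; apply/imsetP; exists a.
- by move=> t /imsetP[a _ ->]; exists a.
- by move=> a a' /tup_inj.
Qed.

Lemma SA1_weight_proj_cst (R : sym s) (t : {t : (ar R).-tuple X | t \in Defs.rel X R})
    (j : 'I_k) (i : (j.+1).-tuple 'I_(ar R)) (b : (j.+1).-tuple A) :
  SA1_weight (tup (proj (val t) i)) (tup b) =
  \sum_(d : {t : (ar R).-tuple A | t \in Defs.rel A R} | proj (val d) i == b)
    SA1_weight (cst k t) (cst k d).
Proof.
pose h (d : {t : (ar R).-tuple A | t \in Defs.rel A R}) :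
  (ar (cons_sym (Rproj_cons i t))).-tuple (star k A) := [tuple cst k d; tup (proj (val d) i)].
have marg := @SA1_single_marg _ _ _ P Q P_cons Q_unsat (Rproj_cons i t) _ h ord0 ord_max.
rewrite /SA1_weight marg; first by apply: eq_bigl => d; apply/eqP/eqP => [/tup_inj|<-].
- by move=> d; apply/imsetP; exists d.
- by move=> t' /imsetP[d _ ->]; exists d.
- by move=> d d' /cst_inj.
Qed.

Lemma SA1_weighting : weighting SA1_weight.
Proof.
split.
- by move=> u v; apply: P_bounds; rewrite dom_single cards1.
- by move=> u; rewrite -(P_sum1 (V := [set u])) ?cards1 // sum_dom_set1.
- exact: SA1_weight_compatible.
- exact: SA1_weight_proj_tup.
- exact: SA1_weight_proj_cst.
Qed.

End SA1toWeighting.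

Lemma SA1_feasible_weighting (s : signature) (X A : sstructure s) (k : nat) :
  SA_feasible (star k X) (star k A) 1 -> exists W, weighting (k := k) (X := X) (A := A) W.
Proof.
move=> [P [Q [[P01 _] P_sum1 _ P_cons Q_unsat]]].
by exists (SA1_weight P); exact: SA1_weighting P01 P_sum1 P_cons Q_unsat.
Qed.

Section WeightingToSA1.
Variables (s : signature) (X A : sstructure s) (k : nat).
Variable W : star_univ k X -> star_univ k A -> rat.
Hypothesis hW : weighting W.

Local Notation consistentS := (@consistent _ (star k X) (star k A)).
Local Notation singleS := (@single _ (star k X) (star k A)).

Lemma weight_tup_support (j : 'I_k) (x : (j.+1).-tuple X) v :
  W (tup x) v != 0 -> exists2 a : (j.+1).-tuple A, consistent x a & v = tup a.
Proof.
move/(weighting_compatible hW) => /andP[].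
by case: v => [[j' a]|d] //= /eqP [e]; subst j' => cv; exists a.
Qed.

Lemma weight_cst_support (R : sym s) (t : {t : (ar R).-tuple X | t \in Defs.rel X R}) v :
  W (cst k t) v != 0 ->
  exists2 d : {t : (ar R).-tuple A | t \in Defs.rel A R},
    consistent (val t) (val d) & v = cst k d.
Proof.
move/(weighting_compatible hW) => /andP[].
by case: v => [[j' a]|[R' d]] //= /eqP [e]; subst R' => cv; exists d.
Qed.

Lemma weight_kind_ne u v : star_kind v != star_kind u -> W u v = 0.
Proof.
move=> ne; apply/eqP; apply: contraNT ne.
by move/(weighting_compatible hW) => /andP[].
Qed.

Lemma consistent_Tproj (j j' : 'I_k) (i : (j'.+1).-tuple 'I_(j.+1)) (x : (j.+1).-tuple X)
    (a : (j.+1).-tuple A) :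
  consistent x a ->
  consistentS [tuple tup x; tup (proj x i)] [tuple tup a; tup (proj a i)].
Proof.
move=> c; rewrite /= consistent_pair; apply/implyP => /eqP e.
have ej : j = j' by have := congr1 (@star_kind _ _ _) e => -[].
have es : (x : seq X) = proj x i by have := congr1 (@star_seq _ _ _) e.
apply/eqP; apply: star_kind_seq_inj; first by rewrite /= ej.
by apply: (inj_map Some_inj); rewrite /= -(map_assign_proj i c) -es; apply/esym/eqP.
Qed.

Lemma consistent_Rproj (R : sym s) (j : 'I_k) (i : (j.+1).-tuple 'I_(ar R))
    (t : {t : (ar R).-tuple X | t \in Defs.rel X R})
    (d : {t : (ar R).-tuple A | t \in Defs.rel A R}) :
  consistentS [tuple cst k t; tup (proj (val t) i)] [tuple cst k d; tup (proj (val d) i)].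
Proof. by rewrite /= consistent_pair. Qed.

Lemma weight_Teq_entry (j : 'I_k) (S : {set 'I_j.+1}) (x : (j.+1).-tuple X) v :
  pattern x S ->
  W (tup x) v =
  \sum_(t | [&& t \in star_rel A (inl (inl (inl (existT _ j S))) : star_sym s k),
             consistentS [tuple tup x] t & tnth t ord0 == v]) W (tup x) (tnth t ord0).
Proof.
move=> px; pose h (a : (j.+1).-tuple A) : 1.-tuple (star_univ k A) := [tuple tup a].
rewrite (big_bij_in (h := h) (Q := fun a => pattern a S && (tup a == v))).
- symmetry; apply: (sum_inj_pred1 (h := fun a : (j.+1).-tuple A => tup a)).
    by move=> a b /tup_inj.
  by move/weight_tup_support => [a ca ->]; exists a; first exact: pattern_consistent ca px.
- by move=> a b _ _ /(congr1 (fun t => tnth t ord0)) /tup_inj.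
- move=> a /andP[pa va]; rewrite va andbT consistent1 andbT.
  by apply/imsetP; exists a; rewrite ?inE.
by move=> t /and3P[/imsetP[a]]; rewrite inE => pa -> _ va; exists a => //; apply/andP; split.
Qed.

Lemma weight_Req_entry (R : sym s) (S : {set 'I_(ar R)})
    (t : {t : (ar R).-tuple X | t \in Defs.rel X R}) v :
  pattern (val t) S ->
  W (cst k t) v =
  \sum_(t' | [&& t' \in star_rel A (inl (inr (existT _ R S)) : star_sym s k),
              consistentS [tuple cst k t] t' & tnth t' ord0 == v]) W (cst k t) (tnth t' ord0).
Proof.
move=> pt; pose h (d : {t : (ar R).-tuple A | t \in Defs.rel A R}) :
  1.-tuple (star_univ k A) := [tuple cst k d].
rewrite (big_bij_in (h := h) (Q := fun d => pattern (val d) S && (cst k d == v))).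
- symmetry; apply: (sum_inj_pred1 (h := fun d => cst k d)) => [a b /cst_inj //|].
  by move/weight_cst_support => [d cd ->]; exists d; first exact: pattern_consistent cd pt.
- by move=> a b _ _ /(congr1 (fun t => tnth t ord0)) /cst_inj.
- move=> d /andP[pd vd]; rewrite vd andbT consistent1 andbT.
  by apply/imsetP; exists d; rewrite ?inE.
by move=> t' /and3P[/imsetP[d]]; rewrite inE => pd -> _ vd; exists d => //; apply/andP; split.
Qed.

Lemma weight_Tproj_entry0 (j j' : 'I_k) (i : (j'.+1).-tuple 'I_(j.+1)) (x : (j.+1).-tuple X) v :
  W (tup x) v =
  \sum_(t | [&& t \in star_rel A (inl (inl (inr (existT _ (j, j') i))) : star_sym s k),
             consistentS [tuple tup x; tup (proj x i)] t & tnth t ord0 == v])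
    W (tup x) (tnth t ord0).
Proof.
pose h (a : (j.+1).-tuple A) : 2.-tuple (star_univ k A) := [tuple tup a; tup (proj a i)].
rewrite (big_bij_in (h := h)
  (Q := fun a => consistentS [tuple tup x; tup (proj x i)] (h a) && (tup a == v))).
- symmetry; apply: (sum_inj_pred1 (h := fun a : (j.+1).-tuple A => tup a)).
    by move=> a b /tup_inj.
  by move/weight_tup_support => [a ca ->]; exists a; first exact: consistent_Tproj.
- by move=> a b _ _ /(congr1 (fun t => tnth t ord0)) /tup_inj.
- by move=> a /andP[ca va]; rewrite va ca !andbT; apply/imsetP; exists a.
by move=> t /and3P[/imsetP[a _ ->] ca va]; exists a; rewrite ?ca.
Qed.

Lemma weight_Tproj_entry1 (j j' : 'I_k) (i : (j'.+1).-tuple 'I_(j.+1)) (x : (j.+1).-tuple X) v :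
  W (tup (proj x i)) v =
  \sum_(t | [&& t \in star_rel A (inl (inl (inr (existT _ (j, j') i))) : star_sym s k),
             consistentS [tuple tup x; tup (proj x i)] t & tnth t ord_max == v])
    W (tup x) (tnth t ord0).
Proof.
pose h (a : (j.+1).-tuple A) : 2.-tuple (star_univ k A) := [tuple tup a; tup (proj a i)].
rewrite (big_bij_in (h := h)
  (Q := fun a => consistentS [tuple tup x; tup (proj x i)] (h a) && (tup (proj a i) == v))).
- have [/eqP/star_kind_tup [b ->]|ne] := boolP (star_kind v == inl j').
    rewrite (weighting_proj_tup hW); apply: eq_bigl_supp => a.
    move/(weighting_compatible hW) => /andP[_ ca] /=.
    by rewrite (consistent_Tproj i ca) /=; apply/eqP/eqP => [->|/tup_inj].
  rewrite weight_kind_ne //; apply/esym/big1 => a /andP[_ /eqP e].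
  by move: ne; rewrite -e eqxx.
- by move=> a b _ _ /(congr1 (fun t => tnth t ord0)) /tup_inj.
- by move=> a /andP[ca va]; rewrite va ca !andbT; apply/imsetP; exists a.
by move=> t /and3P[/imsetP[a _ ->] ca va]; exists a; rewrite ?ca.
Qed.

Lemma weight_Rproj_entry0 (R : sym s) (j : 'I_k) (i : (j.+1).-tuple 'I_(ar R))
    (t : {t : (ar R).-tuple X | t \in Defs.rel X R}) v :
  W (cst k t) v =
  \sum_(t' | [&& t' \in star_rel A (inr (existT _ (R, j) i) : star_sym s k),
              consistentS [tuple cst k t; tup (proj (val t) i)] t' & tnth t' ord0 == v])
    W (cst k t) (tnth t' ord0).
Proof.
pose h (d : {t : (ar R).-tuple A | t \in Defs.rel A R}) : 2.-tuple (star_univ k A) :=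
  [tuple cst k d; tup (proj (val d) i)].
rewrite (big_bij_in (h := h) (Q := fun d => cst k d == v)).
- symmetry; rewrite (eq_bigl (fun d => true && (cst k d == v))) //.
  apply: (sum_inj_pred1 (h := fun d => cst k d)) => [a b /cst_inj //|].
  by move/weight_cst_support => [d cd ->]; exists d.
- by move=> a b _ _ /(congr1 (fun t => tnth t ord0)) /cst_inj.
- by move=> d vd; rewrite vd consistent_Rproj !andbT; apply/imsetP; exists d.
by move=> t' /and3P[/imsetP[d _ ->] _ vd]; exists d.
Qed.

Lemma weight_Rproj_entry1 (R : sym s) (j : 'I_k) (i : (j.+1).-tuple 'I_(ar R))
    (t : {t : (ar R).-tuple X | t \in Defs.rel X R}) v :
  W (tup (proj (val t) i)) v =
  \sum_(t' | [&& t' \in star_rel A (inr (existT _ (R, j) i) : star_sym s k),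
              consistentS [tuple cst k t; tup (proj (val t) i)] t' & tnth t' ord_max == v])
    W (cst k t) (tnth t' ord0).
Proof.
pose h (d : {t : (ar R).-tuple A | t \in Defs.rel A R}) : 2.-tuple (star_univ k A) :=
  [tuple cst k d; tup (proj (val d) i)].
rewrite (big_bij_in (h := h) (Q := fun d => tup (proj (val d) i) == v)).
- have [/eqP/star_kind_tup [b ->]|ne] := boolP (star_kind v == inl j).
    by rewrite (weighting_proj_cst hW); apply: eq_bigl => d; apply/eqP/eqP => [->|/tup_inj].
  rewrite weight_kind_ne //; apply/esym/big1 => d /eqP e.
  by move: ne; rewrite -e eqxx.
- by move=> a b _ _ /(congr1 (fun t => tnth t ord0)) /cst_inj.
- by move=> d vd; rewrite vd consistent_Rproj !andbT; apply/imsetP; exists d.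
by move=> t' /and3P[/imsetP[d _ ->] _ vd]; exists d.
Qed.

Lemma weight_cons_entry (c : cons_of (star k X)) (m : 'I_(ar (cons_sym c))) v :
  W (tnth (Defs.cons_tuple c) m) v =
  \sum_(t | [&& t \in Defs.rel (star k A) (cons_sym c), consistentS (Defs.cons_tuple c) t
             & tnth t m == v])
    W (tnth (Defs.cons_tuple c) (cons_entry0 c)) (tnth t (cons_entry0 c)).
Proof.
rewrite /cons_entry0.
case: c m => [[[[[j S]|[[j j'] i]]|[R S]]|[[R j] i]] [t Ht]] m /=;
  set e0 := Ordinal _; have -> : e0 = ord0 by apply: val_inj.
- have [x px et] : exists2 x, pattern x S & t = [tuple tup x].
    by case/imsetP: (Ht) => x; rewrite inE => ??; exists x.
  by subst t; rewrite (ord1 m); apply: weight_Teq_entry.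
- have [x et] : exists x, t = [tuple tup x; tup (proj x i)].
    by case/imsetP: (Ht) => x _ ?; exists x.
  subst t; case: m => [[|[|//]] lt].
    by rewrite (_ : Ordinal lt = ord0); [apply: weight_Tproj_entry0 | apply: val_inj].
  by rewrite (_ : Ordinal lt = ord_max); [apply: weight_Tproj_entry1 | apply: val_inj].
- have [t0 pt0 et] : exists2 t0, pattern (val t0) S & t = [tuple cst k t0].
    by case/imsetP: (Ht) => t0; rewrite inE => ??; exists t0.
  by subst t; rewrite (ord1 m); apply: weight_Req_entry.
- have [t0 et] : exists t0, t = [tuple cst k t0; tup (proj (val t0) i)].
    by case/imsetP: (Ht) => t0 _ ?; exists t0.
  subst t; case: m => [[|[|//]] lt].
    by rewrite (_ : Ordinal lt = ord0); [apply: weight_Rproj_entry0 | apply: val_inj].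
  by rewrite (_ : Ordinal lt = ord_max); [apply: weight_Rproj_entry1 | apply: val_inj].
Qed.

Definition weight_opt (u : star_univ k X) (o : option (star_univ k A)) : rat :=
  if o is Some v then W u v else 0.

Definition star_p (f : pfun (star k X) (star k A)) : rat :=
  \sum_(u | dom f == [set u]) weight_opt u (f u).

(* Any entry of c would do: by [weight_cons_entry] they all induce the same
   distribution on the tuples satisfying c. *)
Definition star_q (c : cons_of (star k X)) (g : pfun (star k X) (star k A)) : rat :=
  let u := tnth (Defs.cons_tuple c) (cons_entry0 c) in
  if sat c g then weight_opt u (g u) else 0.

Lemma weight_opt_bounds u o : 0 <= weight_opt u o <= 1.
Proof. by case: o => [v|] /=; rewrite ?(weighting_bounds hW) ?lexx ?ler01. Qed.

Lemma star_p_single u v : star_p (singleS u v) = W u v.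
Proof.
rewrite /star_p dom_single (big_pred1 u) ?ffunE ?eqxx // => u' /=.
by apply/eqP/eqP => [/set1_inj ->|->].
Qed.

Lemma star_p_bounds f : (1 <= #|dom f| <= 1)%N -> 0 <= star_p f <= 1.
Proof.
move=> H; have /cards1P [u du] : #|dom f| == 1%N by rewrite eqn_leq andbC.
by have [v ->] := dom_set1 du; rewrite star_p_single (weighting_bounds hW).
Qed.

Lemma star_q_bounds c g : 0 <= star_q c g <= 1.
Proof. by rewrite /star_q; case: ifP => _; rewrite ?weight_opt_bounds ?lexx ?ler01. Qed.

Lemma star_q_unsat c f : dom f = cset c -> ~~ sat c f -> star_q c f = 0.
Proof. by move=> _ /negbTE ns; rewrite /star_q ns. Qed.

Lemma star_p_sum1 (V : {set star k X}) : (1 <= #|V| <= 1)%N ->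
  \sum_(f | dom f == V) star_p f = 1.
Proof.
move=> H; have /cards1P [u ->] : #|V| == 1%N by rewrite eqn_leq andbC.
by rewrite sum_dom_set1 -(weighting_sum1 hW u); apply: eq_bigr => v _; rewrite star_p_single.
Qed.

Lemma star_p_marg (U V : {set star k X}) (f : pfun (star k X) (star k A)) :
  U \subset V -> (1 <= #|U|)%N -> (#|V| <= 1)%N -> dom f = U ->
  star_p f = \sum_(g | (dom g == V) && restricts g f) star_p g.
Proof.
move=> sUV U1 V1 df.
have <- : U = V by apply/eqP; rewrite eqEcard sUV (leq_trans V1 U1).
rewrite (big_pred1 f) // => g /=.
have [dg|ne] := eqVneq (dom g) U; first by rewrite restricts_dom_eq // dg df.
by apply/esym/eqP => gf; move: ne; rewrite gf df eqxx.
Qed.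

Lemma star_p_cons c (U : {set star k X}) (f : pfun (star k X) (star k A)) :
  U \subset cset c -> (1 <= #|U| <= 1)%N -> dom f = U ->
  star_p f = \sum_(g | (dom g == cset c) && restricts g f) star_q c g.
Proof.
move=> sU HU df.
have /cards1P [u Uu] : #|U| == 1%N by rewrite eqn_leq andbC.
have [v ->] := dom_set1 (etrans df Uu).
have : u \in cset c by rewrite -sub1set -Uu.
rewrite inE => /tnthP [m ->].
rewrite star_p_single (sum_cons_restricts_single star_q_unsat) weight_cons_entry.
apply: eq_bigr => t /and3P[Ht ct _]; rewrite /star_q (assign_tnth _ ct).
suff -> : sat c (assign (Defs.cons_tuple c) t) by [].
by rewrite satE; apply/existsP; exists t; rewrite Ht; exact: ct.
Qed.

Lemma weighting_SA1_feasible : SA_feasible (star k X) (star k A) 1.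
Proof.
exists star_p, star_q; split.
- by split=> [f|c f _]; [exact: star_p_bounds | exact: star_q_bounds].
- exact: star_p_sum1.
- exact: star_p_marg.
- exact: star_p_cons.
- exact: star_q_unsat.
Qed.

End WeightingToSA1.

Section WeightingToSA.
Variables (s : signature) (X A : sstructure s) (k : nat).
Hypothesis ar_pos : forall R : sym s, (0 < ar R)%N.
Variable W : star_univ k X -> star_univ k A -> rat.
Hypothesis hW : weighting W.

Definition lift (u : star_univ k X) (f : pfun X A) : rat :=
  \sum_(v | compatible u v && (assign (star_seq u) (star_seq v) == f)) W u v.

Definition is_tup (u : star_univ k X) : bool := if u is inl _ then true else false.

(* The sum has at most one term: the element of X^{*k} enumerating [dom f]. *)
Definition lift_p (f : pfun X A) : rat :=
  \sum_(u | is_tup u && (star_seq u == enum (dom f))) lift u f.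

Definition lift_q (c : cons_of X) (f : pfun X A) : rat := lift (cst k (tagged c)) f.

Lemma eq_bigl_compatible u (P1 P2 : pred (star_univ k A)) :
  (forall v, compatible u v -> P1 v = P2 v) ->
  \sum_(v | P1 v) W u v = \sum_(v | P2 v) W u v.
Proof. by move=> h; apply: eq_bigl_supp => v /(weighting_compatible hW) /h. Qed.

Lemma liftE u f : lift u f = \sum_(v | assign (star_seq u) (star_seq v) == f) W u v.
Proof. by apply: eq_bigl_compatible => v ->. Qed.

Lemma sum_lift u (P : pred (pfun X A)) :
  \sum_(f | P f) lift u f = \sum_(v | P (assign (star_seq u) (star_seq v))) W u v.
Proof.
under eq_bigr do rewrite liftE.
rewrite (exchange_big_dep (fun v => P (assign (star_seq u) (star_seq v)))) /=; last first.
  by move=> f v Pf /eqP ->.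
apply: eq_bigr => v Pv; rewrite (big_pred1 (assign (star_seq u) (star_seq v))) //.
by move=> f /=; apply/andP/eqP => [[_ /eqP <-]|->].
Qed.

Lemma lift_bounds u f : 0 <= lift u f <= 1.
Proof.
have W01 := weighting_bounds hW u.
apply/andP; split; first by apply: sumr_ge0 => v _; case/andP: (W01 v).
rewrite -(weighting_sum1 hW u) [leRHS]big_mkcond [leLHS]big_mkcond /=.
by apply: ler_sum => v _; case: ifP => _; case/andP: (W01 v).
Qed.

Lemma lift_tup (j : 'I_k) (x : (j.+1).-tuple X) f :
  lift (tup x) f = \sum_(a : (j.+1).-tuple A | assign x a == f) W (tup x) (tup a).
Proof.
rewrite liftE (eq_bigl_compatible
  (P2 := fun v => (star_kind v == inl j) && (assign x (star_seq v) == f))) ?sum_kind_tup //.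
by move=> v /andP[/eqP -> _]; rewrite eqxx.
Qed.

Lemma enum_tup (V : {set X}) : (1 <= #|V| <= k)%N ->
  exists (j : 'I_k) (x : (j.+1).-tuple X), x = enum V :> seq X.
Proof.
move=> /andP[V1 Vk]; have lt : (#|V|.-1 < k)%N by rewrite prednK.
have sz : size (enum V) == (Ordinal lt).+1 by rewrite /= prednK // -cardE.
by exists (Ordinal lt), (Tuple sz).
Qed.

Lemma lift_p_tup f (j : 'I_k) (x : (j.+1).-tuple X) :
  x = enum (dom f) :> seq X -> lift_p f = lift (tup x) f.
Proof.
move=> e; rewrite /lift_p (big_pred1 (tup x)) // => u /=.
apply/andP/eqP => [[tu /eqP e']|->]; last by rewrite /= e.
case: u tu e' => [[j' x']|//] _ /= e'; apply: star_kind_seq_inj; last by rewrite /= e.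
by congr inl; apply/val_inj/succn_inj; rewrite -(size_tuple x) -(size_tuple x') e e'.
Qed.

Lemma lift_proj_tup (j j' : 'I_k) (x : (j.+1).-tuple X) (i : (j'.+1).-tuple 'I_(j.+1)) f :
  dom f = [set y | y \in (proj x i : seq X)] ->
  lift (tup (proj x i)) f = \sum_(v | restricts (assign x (star_seq v)) f) W (tup x) v.
Proof.
move=> df; rewrite lift_tup.
under eq_bigr do rewrite (weighting_proj_tup hW).
rewrite big_fibers (eq_bigl_compatible (P2 := fun v =>
  (star_kind v == inl j) && restricts (assign x (star_seq v)) f)); last first.
  by move=> v /andP[/eqP -> _]; rewrite eqxx.
rewrite sum_kind_tup; apply: eq_bigl_supp => a /(weighting_compatible hW) /andP[_ ca].
exact: assign_eq_restricts (map_assign_proj i ca) df.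
Qed.

Lemma lift_proj_cst (R : sym s) (t : {t : (ar R).-tuple X | t \in Defs.rel X R})
    (j : 'I_k) (i : (j.+1).-tuple 'I_(ar R)) f :
  dom f = [set y | y \in (proj (val t) i : seq X)] ->
  lift (tup (proj (val t) i)) f =
  \sum_(v | restricts (assign (val t) (star_seq v)) f) W (cst k t) v.
Proof.
move=> df; rewrite lift_tup.
under eq_bigr do rewrite (weighting_proj_cst hW).
rewrite big_fibers (eq_bigl_compatible (P2 := fun v =>
  (star_kind v == inr R) && restricts (assign (val t) (star_seq v)) f)); last first.
  by move=> v /andP[/eqP -> _]; rewrite eqxx.
rewrite sum_kind_cst; apply: eq_bigl_supp => d /(weighting_compatible hW) /andP[_ cd].
exact: assign_eq_restricts (map_assign_proj i cd) df.
Qed.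

Lemma lift_p_bounds f : (1 <= #|dom f| <= k)%N -> 0 <= lift_p f <= 1.
Proof. by move/enum_tup => [j [x e]]; rewrite (lift_p_tup e) lift_bounds. Qed.

Lemma lift_p_sum1 (V : {set X}) : (1 <= #|V| <= k)%N -> \sum_(f | dom f == V) lift_p f = 1.
Proof.
move/enum_tup => [j [x e]].
under eq_bigr => f /eqP df do rewrite (lift_p_tup (x := x)) ?df //.
rewrite sum_lift -(weighting_sum1 hW (tup x)); apply: eq_bigl_compatible => v /andP[_ cv].
by rewrite dom_assign //= e set_enum eqxx.
Qed.

Lemma lift_p_marg (U V : {set X}) (f : pfun X A) :
  U \subset V -> (1 <= #|U|)%N -> (#|V| <= k)%N -> dom f = U ->
  lift_p f = \sum_(g | (dom g == V) && restricts g f) lift_p g.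
Proof.
move=> sUV U1 Vk df; have UV := subset_leq_card sUV.
have [jU [y ey]] := enum_tup (introT andP (conj U1 (leq_trans UV Vk))).
have [jV [x ex]] := enum_tup (introT andP (conj (leq_trans U1 UV) Vk)).
have [i pi] : exists i : (jU.+1).-tuple 'I_(jV.+1), proj x i = y.
  apply: proj_exists ord0 _ => z zy; have : z \in enum U by rewrite -ey.
  by rewrite mem_enum => /(subsetP sUV); rewrite -mem_enum -ex.
under eq_bigr => g /andP[/eqP dg _] do rewrite (lift_p_tup (x := x)) ?dg //.
rewrite (lift_p_tup (x := y)) ?df // -pi lift_proj_tup; last by rewrite pi ey set_enum.
rewrite sum_lift; apply: eq_bigl_compatible => v /andP[_ cv].
by rewrite dom_assign //= ex set_enum eqxx.
Qed.

Lemma lift_p_cons c (U : {set X}) (f : pfun X A) :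
  U \subset cset c -> (1 <= #|U| <= k)%N -> dom f = U ->
  lift_p f = \sum_(g | (dom g == cset c) && restricts g f) lift_q c g.
Proof.
case: c => R t sU HU df; have [jU [y ey]] := enum_tup HU.
have [i pi] : exists i : (jU.+1).-tuple 'I_(ar R), proj (val t) i = y.
  apply: proj_exists (Ordinal (ar_pos R)) _ => z zy; have : z \in enum U by rewrite -ey.
  by rewrite mem_enum => /(subsetP sU); rewrite inE.
rewrite (lift_p_tup (x := y)) ?df // -pi lift_proj_cst; last by rewrite pi ey set_enum.
rewrite /lift_q sum_lift; apply: eq_bigl_compatible => v /andP[_ cv].
by rewrite dom_assign // eqxx.
Qed.

Lemma lift_q_unsat c f : dom f = cset c -> ~~ sat c f -> lift_q c f = 0.
Proof.
case: c => R t df ns; apply: big1 => v /andP[/andP[/eqP kv cv] /eqP ev].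
case: v kv cv ev => [[j x]|[R' [d Hd]]] //= [e]; subst R' => cv ev.
by case/negP: ns; rewrite satE; apply/existsP; exists d; rewrite Hd -ev; exact: cv.
Qed.

Lemma weighting_SA_feasible : SA_feasible X A k.
Proof.
exists lift_p, lift_q; split.
- by split=> [f|c f _]; [exact: lift_p_bounds | exact: lift_bounds].
- exact: lift_p_sum1.
- exact: lift_p_marg.
- exact: lift_p_cons.
- exact: lift_q_unsat.
Qed.

End WeightingToSA.

Theorem lemma7p3 (s : signature) (X A : sstructure s) (k : nat) :
  (forall R : sym s, 0 < ar R)%N -> (1 <= k)%N ->
  SA_feasible X A k <-> SA_feasible (star k X) (star k A) 1.
Proof.
move=> ar_pos k_pos.
split=> [/(SA_feasible_weighting ar_pos k_pos)|/SA1_feasible_weighting] [W hW].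
- exact: weighting_SA1_feasible hW.
- exact: (weighting_SA_feasible ar_pos hW).
Qed.
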